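(* Let $\mathcal{V}$ be a variety of algebras, $\mathcal{C}$ a full subcategory of the category of finitely generated free $\mathcal{V}$-algebras containing the free monogenic algebra $A_0$ on $x_0$, and $\Phi$ an automorphism of $\mathcal{C}$. Let $w^\Phi(x_0)=\eta^\Phi_0(\eta^{\Phi^{-1}}(x_0))\in A_0$, and let $c^\Phi_A=s^{\Phi^{-1}}_{\Phi(A)}\circ s^\Phi_A:|A|\to|A|$. Then for every $\mathcal{C}$-algebra $A$ and every $a\in A$ we have $c^\Phi_A(a)=w^\Phi(a)$; in particular $c^\Phi_A(a)$ lies in the subalgebra of $A$ generated by $a$. If $w^\Phi(x_0)=x_0$, then all maps $c^\Phi_A$ are identity maps and $\Phi$ is potentially inner.
   Context: Objects of $\mathcal{C}$ are free $\mathcal{V}$-algebras on finite sets, morphisms are all homomorphisms; $|A|$ is the underlying set. For $a\in A$, $\alpha^A_a:A_0\to A$ is the homomorphism with $x_0\mapsto a$; for an element $w(x_0)\in A_0$ (a term in $x_0$), $w(a):=\alpha^A_a(w(x_0))$. For an automorphism $\Psi\in\{\Phi,\Phi^{-1}\}$: $\eta^\Psi_0:\Psi^{-1}(A_0)\to A_0$ is the homomorphism sending every element of a fixed basis of $\Psi^{-1}(A_0)$ to $x_0$ (the identity if $\Psi(A_0)=A_0$), $\eta^\Psi=\Psi(\eta^\Psi_0):A_0\to\Psi(A_0)$, and the main function is $s^\Psi_A:|A|\to|\Psi(A)|$, $s^\Psi_A(a)=\Psi(\alpha^A_a)(\eta^\Psi(x_0))$. $\Phi$ is potentially inner if there are bijections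 $s_A:|A|\to|\Phi(A)|$ with $\Phi(\mu)\circ s_A=s_B\circ\mu$ for all homomorphisms $\mu:A\to B$ in $\mathcal{C}$. *)

From mathcomp Require Import all_boot.

Set Implicit Arguments.
Unset Strict Implicit.
Unset Printing Implicit Defensive.

Section Variety.

Variable ops : Type.
Variable ar : ops -> nat.

Record alg := Alg {
  carrier :> Type;
  op_of : forall o : ops, ('I_(ar o) -> carrier) -> carrier }.

Definition is_hom (A B : alg) (f : A -> B) : Prop :=
  forall (o : ops) (args : 'I_(ar o) -> A),
    f (@op_of A o args) = @op_of B o (fun i => f (args i)).

Inductive term (X : Type) : Type :=
| Var : X -> term X
| App : forall o : ops, ('I_(ar o) -> term X) -> term X.

Fixpoint eval (A : alg) (X : Type) (v : X -> A) (t : term X) : A :=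
  match t with
  | Var x => v x
  | App o args => @op_of A o (fun i => eval v (args i))
  end.

(* The variety V: the class of algebras satisfying a set E of identities. *)
Variable E : term nat -> term nat -> Prop.

Definition in_variety (A : alg) : Prop :=
  forall l r, E l r -> forall v : nat -> A, eval v l = eval v r.

Record freeAlg := FreeAlg {
  fa :> alg;
  fa_n : nat;
  fa_basis : 'I_fa_n -> fa;
  fa_in : in_variety fa;
  fa_lift : forall B : alg, ('I_fa_n -> B) -> fa -> B;
  fa_lift_hom : forall B : alg, in_variety B ->
      forall g : 'I_fa_n -> B, is_hom (fa_lift g);
  fa_lift_basis : forall B : alg, in_variety B ->
      forall (g : 'I_fa_n -> B) i, fa_lift g (fa_basis i) = g i;
  fa_lift_uniq : forall B : alg, in_variety B ->
      forall (g : 'I_fa_n -> B) (h : fa -> B), is_hom h ->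
      (forall i, h (fa_basis i) = g i) -> forall x, h x = fa_lift g x }.

(* The full subcategory C: a class of free V-algebras; morphisms are all
   homomorphisms. *)
Variable inC : freeAlg -> Prop.

Definition Obj := {A : freeAlg | inC A}.
Definition car (A : Obj) : Type := carrier (fa (sval A)).
Definition hom (A B : Obj) (f : car A -> car B) : Prop :=
  @is_hom (fa (sval A)) (fa (sval B)) f.

Definition castc (A A' : Obj) (e : A = A') (x : car A) : car A' :=
  eq_rect A car x A' e.

(* An automorphism of C: a functor (Fo, Fm) with a strict inverse functor
   (Go, Gm).  Functors act on morphisms (= homomorphisms); the action on
   non-homomorphic functions is irrelevant. *)
Record catAut := CatAut {
  Fo : Obj -> Obj;
  Fm : forall A B : Obj, (car A -> car B) -> car (Fo A) -> car (Fo B);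
  Go : Obj -> Obj;
  Gm : forall A B : Obj, (car A -> car B) -> car (Go A) -> car (Go B);
  Fm_hom : forall A B f, hom f -> hom (@Fm A B f);
  Fm_id : forall A x, @Fm A A (fun y => y) x = x;
  Fm_comp : forall A B C (f : car A -> car B) (g : car B -> car C),
      hom f -> hom g -> forall x, Fm (fun y => g (f y)) x = Fm g (Fm f x);
  Gm_hom : forall A B f, hom f -> hom (@Gm A B f);
  Gm_id : forall A x, @Gm A A (fun y => y) x = x;
  Gm_comp : forall A B C (f : car A -> car B) (g : car B -> car C),
      hom f -> hom g -> forall x, Gm (fun y => g (f y)) x = Gm g (Gm f x);
  GF_o : forall A, Go (Fo A) = A;
  FG_o : forall A, Fo (Go A) = A;
  GF_m : forall A B (f : car A -> car B), hom f ->
      forall x, castc (GF_o B) (Gm (Fm f) x) = f (castc (GF_o A) x);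
  FG_m : forall A B (f : car A -> car B), hom f ->
      forall x, castc (FG_o B) (Fm (Gm f) x) = f (castc (FG_o A) x) }.

Arguments Fm c {A B} _ _.
Arguments Gm c {A B} _ _.

Unset Implicit Arguments.

Definition inv (F : catAut) : catAut :=
  @CatAut (Go F) (@Gm F) (Fo F) (@Fm F)
    (@Gm_hom F) (@Gm_id F) (@Gm_comp F)
    (@Fm_hom F) (@Fm_id F) (@Fm_comp F)
    (FG_o F) (GF_o F) (@FG_m F) (@GF_m F).

(* The free monogenic algebra A0 in C on x0 (x0 its fixed basis element). *)
Variable A0 : Obj.
Variable x0 : car A0.

Definition alpha (A : Obj) (a : car A) : car A0 -> car A :=
  @fa_lift (sval A0) (fa (sval A)) (fun _ => a).

Definition eta0 (F : catAut) : car (Go F A0) -> car A0 :=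
  @fa_lift (sval (Go F A0)) (fa (sval A0)) (fun _ => x0).

(* eta^Psi = Psi(eta^Psi_0) : A0 = Psi(Psi^{-1}(A0)) -> Psi(A0) *)
Definition eta (F : catAut) (x : car A0) : car (Fo F A0) :=
  @Fm F (Go F A0) A0 (eta0 F) (castc (esym (FG_o F A0)) x).

Definition smain (F : catAut) (A : Obj) (a : car A) : car (Fo F A) :=
  @Fm F A0 A (alpha A a) (eta F x0).

Definition wPhi (F : catAut) : car A0 := eta0 F (eta (inv F) x0).

Definition cPhi (F : catAut) (A : Obj) (a : car A) : car A :=
  castc (GF_o F A) (smain (inv F) (Fo F A) (smain F A a)).

Definition potentially_inner (F : catAut) : Prop :=
  exists s : forall A : Obj, car A -> car (Fo F A),
    (forall A, bijective (s A)) /\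
    (forall A B (mu : car A -> car B), hom mu ->
       forall x, Fm F mu (s A x) = s B (mu x)).

End Variety.

Definition in_subalg (ops : Type) (ar : ops -> nat) (A : alg ar) (a b : A) : Prop :=
  forall P : A -> Prop, P a ->
    (forall o args, (forall i, P (args i)) -> P (@op_of ops ar A o args)) -> P b.

Arguments inv {ops ar E inC} F.
Arguments alpha {ops ar E inC} A0 A a _.
Arguments eta0 {ops ar E inC} A0 x0 F _.
Arguments eta {ops ar E inC} A0 x0 F x.
Arguments smain {ops ar E inC} A0 x0 F A a.
Arguments wPhi {ops ar E inC} A0 x0 F.
Arguments cPhi {ops ar E inC} A0 x0 F A a.
Arguments potentially_inner {ops ar E inC} F.
Arguments in_subalg {ops ar} A a b.

(* Homomorphisms out of the monogenic free algebra A0 are determined by the image of x0.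
   Hence alpha_{s(a)} = Phi(alpha_a) o eta^Phi, and applying Phi^-1, which turns Phi(alpha_a)
   back into alpha_a and eta^Phi = Phi(eta^Phi_0) into eta^Phi_0, gives c_A(a) = alpha_a(w(x0)).
   The subalgebra claim holds because A0 is generated by x0.  If w(x0) = x0, then
   eta^Phi o eta^{Phi^-1}_0 = id; as eta^{Phi^-1}_0 is epi (it hits x0, unless Phi(A0) has no
   generators and Phi's faithfulness applies), w^{Phi^-1}(x0) = x0 as well, so the natural
   family s^Phi has the two-sided inverse s^{Phi^-1}. *)
From Pilot Require Import Defs.
From mathcomp Require Import all_boot.
From Stdlib Require Import ProofIrrelevance FunctionalExtensionality.

Arguments Fm {ops ar E inC} c {A B} _ _.
Arguments Gm {ops ar E inC} c {A B} _ _.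


Section FreeAlgebras.
Context {ops : Type} {ar : ops -> nat} {E : term ar nat -> term ar nat -> Prop}.

Lemma fa_hom_eq {X : freeAlg E} {B : alg ar} : in_variety E B ->
  forall {h1 h2 : X -> B}, is_hom h1 -> is_hom h2 ->
  (forall i, h1 (fa_basis i) = h2 (fa_basis i)) -> forall x, h1 x = h2 x.
Proof.
move=> VB h1 h2 hom1 hom2 eq_basis x.
by rewrite (fa_lift_uniq VB hom1 eq_basis) (fa_lift_uniq VB hom2 (fun i => erefl)).
Qed.

Section Subalgebra.
Context {A : alg ar} {P : A -> Prop}.
Hypothesis P_op : forall o args, (forall i, P (args i)) -> P (@op_of _ _ A o args).

Definition sub_alg : alg ar :=
  @Alg ops ar {x | P x}
    (fun o args => exist P _ (P_op o _ (fun i => svalP (args i)))).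

Lemma eval_sub_alg (v : nat -> sub_alg) (t : term ar nat) :
  sval (eval v t) = eval (fun n => sval (v n)) t.
Proof.
elim: t => [n|o args IH] //=.
by congr (op_of _); apply: functional_extensionality => i; exact: IH.
Qed.

Lemma sub_alg_in_variety : in_variety E A -> in_variety E sub_alg.
Proof.
move=> VA l r Elr v; apply: eq_sig_hprop => [x p q|]; first exact: proof_irrelevance.
by rewrite !eval_sub_alg; exact: VA.
Qed.

End Subalgebra.

(* The lift of the basis into the subalgebra [{x | P x}] splits its inclusion. *)
Lemma fa_ind (X : freeAlg E) (P : X -> Prop) :
  (forall i, P (fa_basis i)) ->
  (forall o args, (forall i, P (args i)) -> P (@op_of _ _ X o args)) ->
  forall x, P x.
Proof.
move=> P_basis P_op x.
have VS := sub_alg_in_variety P_op (fa_in (f:=X)).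
pose h := fa_lift (fun i => exist P _ (P_basis i) : sub_alg P_op).
suff -> : x = sval (h x) by exact: svalP.
apply: (fa_hom_eq (fa_in (f:=X)) (h1 := id) (h2 := fun y => sval (h y))) => //.
- by move=> o args /=; rewrite /h (fa_lift_hom VS).
- by move=> i; rewrite /h (fa_lift_basis VS).
Qed.

End FreeAlgebras.

Section Automorphisms.
Context {ops : Type} {ar : ops -> nat} {E : term ar nat -> term ar nat -> Prop}
  {inC : freeAlg E -> Prop}.

Lemma castc_irrelevant {X Y : Obj inC} (e1 e2 : X = Y) (x : car X) :
  castc e1 x = castc e2 x.
Proof. by rewrite (proof_irrelevance _ e1 e2). Qed.

Lemma castc_trans {X Y Z : Obj inC} (e1 : X = Y) (e2 : Y = Z) (x : car X) :
  castc e2 (castc e1 x) = castc (etrans e1 e2) x.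
Proof. by case: Y / e1 e2; case: Z /. Qed.

Lemma castc_id {X : Obj inC} (e : X = X) (x : car X) : castc e x = x.
Proof. exact: (castc_irrelevant e erefl). Qed.

Lemma castcK {X Y : Obj inC} (e : X = Y) (x : car X) : castc (esym e) (castc e x) = x.
Proof. by case: Y / e. Qed.

Lemma castcKV {X Y : Obj inC} (e : X = Y) (y : car Y) : castc e (castc (esym e) y) = y.
Proof. by case: Y / e in y *. Qed.

Lemma hom_castc {X Y : Obj inC} (e : X = Y) : hom (castc e).
Proof. by case: Y / e. Qed.

Lemma hom_comp {X Y Z : Obj inC} {f : car X -> car Y} {g : car Y -> car Z} :
  hom f -> hom g -> hom (fun x => g (f x)).
Proof. by move=> hf hg o args; rewrite /= hf hg. Qed.

Lemma hom_id {X : Obj inC} : hom (fun x : car X => x).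
Proof. by []. Qed.

Lemma Fm_castc (F : catAut inC) {X Y : Obj inC} (e : X = Y) (x : car (Fo F X)) :
  Fm F (castc e) x = castc (f_equal (Fo F) e) x.
Proof. by case: Y / e in x *; exact: Fm_id. Qed.

Lemma Gm_castc (F : catAut inC) {X Y : Obj inC} (e : X = Y) (x : car (Go F X)) :
  Gm F (castc e) x = castc (f_equal (Go F) e) x.
Proof. exact (Fm_castc (Defs.inv F) e x). Qed.

Lemma Fm_faithful (F : catAut inC) {A B : Obj inC} {h1 h2 : car A -> car B} :
  hom h1 -> hom h2 -> (forall u, Fm F h1 u = Fm F h2 u) -> forall x, h1 x = h2 x.
Proof.
move=> hom1 hom2 eqF x; rewrite -[x](castcKV (GF_o F A)) -!GF_m //.
by congr (castc _ (Gm F _ _)); apply: functional_extensionality.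
Qed.

Context {A0 : Obj inC} {x0 : car A0}.
Hypotheses (A0_n : fa_n (sval A0) = 1)
  (A0_basis : forall i : 'I_(fa_n (sval A0)), fa_basis i = x0).

Lemma A0_hom_eq {B : Obj inC} {h1 h2 : car A0 -> car B} :
  hom h1 -> hom h2 -> h1 x0 = h2 x0 -> forall x, h1 x = h2 x.
Proof.
move=> hom1 hom2 eq_x0; apply: (fa_hom_eq (fa_in (f:=sval B)) hom1 hom2) => i.
by rewrite A0_basis.
Qed.

Lemma alpha_hom {A : Obj inC} (a : car A) : hom (alpha A0 A a).
Proof. exact: (fa_lift_hom (fa_in (f:=sval A))). Qed.

Lemma alpha_x0 {A : Obj inC} (a : car A) : alpha A0 A a x0 = a.
Proof.
have i : 'I_(fa_n (sval A0)) by rewrite A0_n; exact: ord0.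
by rewrite -(A0_basis i) /alpha (fa_lift_basis (fa_in (f:=sval A))).
Qed.

Lemma alpha_comp {A B : Obj inC} {mu : car A -> car B} (a : car A) :
  hom mu -> forall x, alpha A0 B (mu a) x = mu (alpha A0 A a x).
Proof.
move=> hmu; apply: A0_hom_eq; first exact: alpha_hom.
  exact: hom_comp (alpha_hom a) hmu.
by rewrite !alpha_x0.
Qed.

Lemma alpha_in_subalg (A : Obj inC) (a : car A) (t : car A0) :
  in_subalg (fa (sval A)) a (alpha A0 A a t).
Proof.
elim/(fa_ind (sval A0)): t => [i | o args IH] P Pa P_op; first by rewrite A0_basis alpha_x0.
by rewrite (alpha_hom a o args); apply: (P_op) => i; exact: IH i P Pa P_op.
Qed.

Lemma eta0_hom (F : catAut inC) : hom (eta0 A0 x0 F).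
Proof. exact: (fa_lift_hom (fa_in (f:=sval A0))). Qed.

Lemma eta_hom (F : catAut inC) : hom (eta A0 x0 F).
Proof. exact: hom_comp (hom_castc _) (Fm_hom (eta0_hom F)). Qed.

Lemma alpha_smain (F : catAut inC) {A : Obj inC} (a : car A) (y : car A0) :
  alpha A0 (Fo F A) (smain A0 x0 F A a) y = Fm F (alpha A0 A a) (eta A0 x0 F y).
Proof.
move: y; apply: A0_hom_eq; first exact: alpha_hom.
  exact: hom_comp (eta_hom F) (Fm_hom (alpha_hom a)).
by rewrite alpha_x0.
Qed.

Lemma Gm_eta (F : catAut inC) (z : car (Go F A0)) :
  castc (GF_o F A0) (Gm F (eta A0 x0 F) z) = eta0 A0 x0 F z.
Proof.
rewrite /eta (Gm_comp (hom_castc _) (Fm_hom (eta0_hom F))) GF_m; last exact: eta0_hom.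
by rewrite Gm_castc castc_trans castc_id.
Qed.

Lemma cPhi_alpha (F : catAut inC) (A : Obj inC) (a : car A) :
  cPhi A0 x0 F A a = alpha A0 A a (wPhi A0 x0 F).
Proof.
rewrite /cPhi {1}/smain (functional_extensionality _ _ (alpha_smain F a)).
rewrite [Fm _ _ _](Gm_comp (eta_hom F) (Fm_hom (alpha_hom a))) GF_m; last exact: alpha_hom.
by rewrite Gm_eta.
Qed.

Lemma cPhi_id (F : catAut inC) : wPhi A0 x0 F = x0 ->
  forall (A : Obj inC) (a : car A), cPhi A0 x0 F A a = a.
Proof. by move=> w_x0 A a; rewrite cPhi_alpha w_x0 alpha_x0. Qed.

Lemma eta0_invK (F : catAut inC) : wPhi A0 x0 F = x0 ->
  cancel (eta0 A0 x0 (Defs.inv F)) (eta A0 x0 F).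
Proof.
move=> w_x0; set f := eta0 A0 x0 F; set g := eta0 A0 x0 (Defs.inv F).
have hg : hom g := eta0_hom (Defs.inv F).
have hGg : hom (fun x => Gm F g (castc (esym (GF_o F A0)) x)).
  exact: hom_comp (hom_castc _) (Gm_hom hg).
have fGg : forall x, f (Gm F g (castc (esym (GF_o F A0)) x)) = x.
  exact: A0_hom_eq (hom_comp hGg (eta0_hom F)) hom_id w_x0.
move=> y; rewrite -[RHS](Fm_id (c:=F)) -(functional_extensionality _ _ fGg).
rewrite (Fm_comp hGg (eta0_hom F)) (Fm_comp (hom_castc _) (Gm_hom hg)) Fm_castc.
rewrite /eta; congr (Fm F f _).
by rewrite -[Fm F (Gm F g) _](castcK (FG_o F A0)) FG_m // castc_trans castc_id.
Qed.

Lemma eta0_epi (F : catAut inC) {B : Obj inC} {h1 h2 : car A0 -> car B} :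
  hom h1 -> hom h2 ->
  (forall y, h1 (eta0 A0 x0 (Defs.inv F) y) = h2 (eta0 A0 x0 (Defs.inv F) y)) ->
  forall x, h1 x = h2 x.
Proof.
move=> hom1 hom2 eq_g; apply: A0_hom_eq => //.
have [n0 | n_gt0] := posnP (fa_n (sval (Fo F A0))).
- apply: (Fm_faithful F hom1 hom2); apply: (fa_hom_eq (fa_in (f:=sval (Fo F B))));
    [exact: Fm_hom | exact: Fm_hom | move=> i].
  by move: (ltn_ord i); rewrite [X in (_ < X)%N]n0.
- have eta0_basis : eta0 A0 x0 (Defs.inv F) (fa_basis (Ordinal n_gt0)) = x0.
    exact: (fa_lift_basis (fa_in (f:=sval A0))).
  by rewrite -eta0_basis eq_g.
Qed.

Lemma wPhi_inv (F : catAut inC) : wPhi A0 x0 F = x0 -> wPhi A0 x0 (Defs.inv F) = x0.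
Proof.
move=> w_x0.
apply: (eta0_epi F (hom_comp (eta_hom F) (eta0_hom (Defs.inv F))) hom_id) => y.
by rewrite eta0_invK.
Qed.

Lemma smain_castc (F : catAut inC) {X Y : Obj inC} (e : X = Y) (z : car X) :
  smain A0 x0 F Y (castc e z) = castc (f_equal (Fo F) e) (smain A0 x0 F X z).
Proof. by case: Y / e. Qed.

Lemma smain_natural (F : catAut inC) {A B : Obj inC} {mu : car A -> car B} :
  hom mu -> forall x, Fm F mu (smain A0 x0 F A x) = smain A0 x0 F B (mu x).
Proof.
move=> hmu x; rewrite /smain (functional_extensionality _ _ (alpha_comp x hmu)).
by rewrite (Fm_comp (alpha_hom x) hmu).
Qed.

Lemma smain_bijective (F : catAut inC) : wPhi A0 x0 F = x0 ->
  forall A : Obj inC, bijective (smain A0 x0 F A).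
Proof.
move=> w_x0 A.
exists (fun y => castc (GF_o F A) (smain A0 x0 (Defs.inv F) (Fo F A) y)) => [a | y].
  exact: cPhi_id.
have := cPhi_id (Defs.inv F) (wPhi_inv F w_x0) _ y; rewrite /cPhi /= => c_y.
by rewrite smain_castc -[RHS]c_y; apply: castc_irrelevant.
Qed.

Lemma potentially_inner_of_wPhi (F : catAut inC) :
  wPhi A0 x0 F = x0 -> potentially_inner F.
Proof.
move=> w_x0; exists (smain A0 x0 F); split; first exact: smain_bijective.
by move=> A B mu; exact: smain_natural.
Qed.

End Automorphisms.

Theorem proposition2
  (ops : Type) (ar : ops -> nat) (E : term ar nat -> term ar nat -> Prop)
  (inC : freeAlg E -> Prop) (A0 : Obj inC) (x0 : car A0)
  (hA0n : fa_n (sval A0) = 1)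
  (hA0b : forall i : 'I_(fa_n (sval A0)), fa_basis i = x0)
  (Phi : catAut inC) :
  (forall (A : Obj inC) (a : car A),
      cPhi A0 x0 Phi A a = alpha A0 A a (wPhi A0 x0 Phi) /\
      in_subalg (fa (sval A)) a (cPhi A0 x0 Phi A a)) /\
  (wPhi A0 x0 Phi = x0 ->
      (forall (A : Obj inC) (a : car A), cPhi A0 x0 Phi A a = a) /\
      potentially_inner Phi).
Proof.
split=> [A a | w_x0].
  rewrite (cPhi_alpha hA0n hA0b); split=> //; exact: alpha_in_subalg hA0n hA0b A a _.
split; first exact: cPhi_id hA0n hA0b Phi w_x0.
exact: potentially_inner_of_wPhi hA0n hA0b Phi w_x0.
Qed.
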